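(* Let $\lambda$ be a singular cardinal of cofinality $\kappa$ and $\vec\lambda=\langle\lambda_i:i<\kappa\rangle$ a strictly increasing sequence of regular cardinals converging to $\lambda$. Then $\mathbb G(\vec\lambda)$ is $(\lambda+1)$-strategically closed.
   Context: For $f,g:\kappa\to\mathrm{ON}$, $f<^*g$ means there is $j<\kappa$ with $f(i)<g(i)$ for all $i\ge j$. Given a $<^*$-increasing sequence $\langle f_\gamma:\gamma<\beta\rangle$ in $\prod_{i<\kappa}\lambda_i$, $\beta$ is a good point if there are an unbounded $A\subseteq\beta$ of order type $\mathrm{cf}(\beta)$ and $j<\kappa$ such that for all $i\ge j$, $\langle f_\gamma(i):\gamma\in A\rangle$ is strictly increasing. $\mathbb G(\vec\lambda)$ consists of sequences $\langle f_\beta:\beta\le\alpha\rangle$ with $\alpha<\lambda^+$ such that for all $\beta\le\alpha$: $f_\beta\in\prod_{i<\kappa}\lambda_i$; $f_\gamma<^*f_\beta$ for all $\gamma<\beta$; and if $\mathrm{cf}(\beta)>\kappa$ then $\beta$ is a good point of $\langle f_\gamma:\gamma<\beta\rangle$. Order is end-extension. A poset is $(\lambda+1)$-strategically closed if in the game of length $\lambda+1$ in which two players alternately choose a decreasing sequence of conditions $\langle p_\xi:\xi\le\lambda\rangle$, with Player II choosing at even stages (including all limit stages and stage $0$), Player II has a strategy guaranteeing that she can make a legal move at every stage $\xi\le\lambda$. *)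

(* Ordinals are modelled as the elements of an arbitrary
   type O carrying a strict well-order lt (all notions below are relative
   to (O, lt); every such O is isomorphic to an ordinal, so everything is
   absolute as long as O contains the ordinals mentioned). *)
From Stdlib Require Import Arith Bool.

Definition le {O : Type} (lt : O -> O -> Prop) (x y : O) : Prop := lt x y \/ x = y.

Definition well_order {O : Type} (lt : O -> O -> Prop) : Prop :=
  (forall x, ~ lt x x) /\
  (forall x y z, lt x y -> lt y z -> lt x z) /\
  (forall x y, lt x y \/ x = y \/ lt y x) /\
  well_founded lt.

Definition is_zero {O : Type} (lt : O -> O -> Prop) (a : O) : Prop :=
  forall x, ~ lt x a.

Definition is_succ {O : Type} (lt : O -> O -> Prop) (a b : O) : Prop :=
  lt a b /\ forall c, lt a c -> le lt b c.

Definition is_limit {O : Type} (lt : O -> O -> Prop) (a : O) : Prop :=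
  ~ is_zero lt a /\ forall b, lt b a -> exists c, lt b c /\ lt c a.

Definition infinite_ord {O : Type} (lt : O -> O -> Prop) (a : O) : Prop :=
  exists w, is_limit lt w /\ le lt w a.

Definition equipotent {O : Type} (lt : O -> O -> Prop) (a b : O) : Prop :=
  exists h : O -> O,
    (forall x, lt x a -> lt (h x) b) /\
    (forall x y, lt x a -> lt y a -> h x = h y -> x = y) /\
    (forall y, lt y b -> exists x, lt x a /\ h x = y).

Definition is_cardinal {O : Type} (lt : O -> O -> Prop) (a : O) : Prop :=
  forall b, lt b a -> ~ equipotent lt b a.

Definition cofinal_in {O : Type} (lt : O -> O -> Prop) (A : O -> Prop) (a : O) : Prop :=
  (forall x, A x -> lt x a) /\ (forall y, lt y a -> exists x, A x /\ le lt y x).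

Definition has_order_type {O : Type} (lt : O -> O -> Prop) (A : O -> Prop) (b : O) : Prop :=
  exists h : O -> O,
    (forall x, A x -> lt (h x) b) /\
    (forall x y, A x -> A y -> (lt x y <-> lt (h x) (h y))) /\
    (forall y, lt y b -> exists x, A x /\ h x = y).

Definition is_cof {O : Type} (lt : O -> O -> Prop) (a c : O) : Prop :=
  (exists A, cofinal_in lt A a /\ has_order_type lt A c) /\
  (forall d A, cofinal_in lt A a -> has_order_type lt A d -> le lt c d).

Definition regular_cardinal {O : Type} (lt : O -> O -> Prop) (a : O) : Prop :=
  is_cardinal lt a /\ infinite_ord lt a /\ is_cof lt a a.

Definition singular_cardinal {O : Type} (lt : O -> O -> Prop) (a : O) : Prop :=
  is_cardinal lt a /\ infinite_ord lt a /\ exists c, is_cof lt a c /\ lt c a.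

Definition is_succ_cardinal {O : Type} (lt : O -> O -> Prop) (a b : O) : Prop :=
  is_cardinal lt b /\ lt a b /\ forall c, is_cardinal lt c -> lt a c -> le lt b c.

Definition ltstar {O : Type} (lt : O -> O -> Prop) (kappa : O) (f g : O -> O) : Prop :=
  exists j, lt j kappa /\ forall i, le lt j i -> lt i kappa -> lt (f i) (g i).

Definition good_point {O : Type} (lt : O -> O -> Prop) (kappa : O)
    (F : O -> O -> O) (beta : O) : Prop :=
  exists (A : O -> Prop) (c : O),
    cofinal_in lt A beta /\ is_cof lt beta c /\ has_order_type lt A c /\
    exists j, lt j kappa /\
      forall i, le lt j i -> lt i kappa ->
        forall g d, A g -> A d -> lt g d -> lt (F g i) (F d i).

(* a condition <f_beta : beta <= clen> ; only values with beta <= clen and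
   i < kappa are meaningful *)
Record cond (O : Type) := Cond { clen : O; cseq : O -> O -> O }.
Arguments clen {O}.
Arguments cseq {O}.

Definition inG {O : Type} (lt : O -> O -> Prop) (kappa : O) (lam : O -> O)
    (lplus : O) (p : cond O) : Prop :=
  lt (clen p) lplus /\
  forall beta, le lt beta (clen p) ->
    (forall i, lt i kappa -> lt (cseq p beta i) (lam i)) /\
    (forall g, lt g beta -> ltstar lt kappa (cseq p g) (cseq p beta)) /\
    (forall c, is_cof lt beta c -> lt kappa c -> good_point lt kappa (cseq p) beta).

Definition extends {O : Type} (lt : O -> O -> Prop) (kappa : O) (p q : cond O) : Prop :=
  le lt (clen q) (clen p) /\
  forall beta i, le lt beta (clen q) -> lt i kappa -> cseq p beta i = cseq q beta i.

Fixpoint nsucc {O : Type} (lt : O -> O -> Prop) (k : nat) (delta xi : O) : Prop :=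
  match k with
  | 0 => xi = delta
  | S k' => exists eta, nsucc lt k' delta eta /\ is_succ lt eta xi
  end.

Definition even_ord {O : Type} (lt : O -> O -> Prop) (xi : O) : Prop :=
  exists delta k, (is_zero lt delta \/ is_limit lt delta) /\ Nat.even k = true /\
    nsucc lt k delta xi.

(* (len+1)-strategic closure of the poset (P, ext), ext p q meaning p <= q.
   A strategy for II maps a stage xi and the previous moves to a move; it may
   only depend on the moves at stages < xi. *)
Definition strat_closed {O X : Type} (lt : O -> O -> Prop) (P : X -> Prop)
    (ext : X -> X -> Prop) (len : O) : Prop :=
  exists sigma : O -> (O -> X) -> X,
    (forall xi p p', (forall eta, lt eta xi -> p eta = p' eta) -> sigma xi p = sigma xi p') /\
    (forall xi (p : O -> X), le lt xi len -> even_ord lt xi ->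
       (forall eta, lt eta xi ->
          P (p eta) /\ (forall eta', lt eta' eta -> ext (p eta) (p eta')) /\
          (even_ord lt eta -> p eta = sigma eta p)) ->
       P (sigma xi p) /\ forall eta, lt eta xi -> ext (sigma xi p) (p eta)).

(* Player II plays, at stage xi, the end-extension of all earlier moves of least
   length, topped by a function that bounds, at every coordinate i past some
   j_xi < kappa, the top functions of the earlier moves (at xi = lambda only those
   along a cofinal set of order type kappa).  Such a bound exists below lam i
   because lam i is regular and exceeds the number of functions to bound, and the
   length stays below lplus because lplus is regular, by Hessenberg's
   lambda * lambda = lambda.  The only new point that has to be good is the top of
   a move at a limit stage xi < lambda of cofinality above kappa: there the top
   functions of II's own earlier moves increase past their coordinates j_eta, and
   as the cofinality exceeds kappa one coordinate j serves a cofinal set of them. *)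

From Stdlib Require Import Classical ClassicalEpsilon FunctionalExtensionality Arith Lia.

Section WellOrder.
Variable O : Type.
Variable lt : O -> O -> Prop.
Hypothesis Hwo : well_order lt.
Variable inh : inhabited O.

Lemma lt_irrefl x : ~ lt x x.
Proof. apply Hwo. Qed.
Lemma lt_trans x y z : lt x y -> lt y z -> lt x z.
Proof. apply Hwo. Qed.
Lemma lt_trichotomy x y : lt x y \/ x = y \/ lt y x.
Proof. apply Hwo. Qed.
Lemma lt_wf : well_founded lt.
Proof. apply Hwo. Qed.
Lemma lt_asym x y : lt x y -> ~ lt y x.
Proof. intros H1 H2. exact (lt_irrefl x (lt_trans _ _ _ H1 H2)). Qed.
Lemma le_refl x : le lt x x.
Proof. right; reflexivity. Qed.
Lemma lt_le_incl x y : lt x y -> le lt x y.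
Proof. left; assumption. Qed.
Lemma le_trans x y z : le lt x y -> le lt y z -> le lt x z.
Proof. intros [H|H] [H'|H']; subst; unfold le; auto. left; eapply lt_trans; eauto. Qed.
Lemma lt_le_trans x y z : lt x y -> le lt y z -> lt x z.
Proof. intros H [H'|H']; subst; auto. eapply lt_trans; eauto. Qed.
Lemma le_lt_trans x y z : le lt x y -> lt y z -> lt x z.
Proof. intros [H|H] H'; subst; auto. eapply lt_trans; eauto. Qed.
Lemma not_lt_le x y : ~ lt x y -> le lt y x.
Proof. intros H. destruct (lt_trichotomy x y) as [h|[h|h]]; [contradiction|right|left]; auto. Qed.
Lemma le_not_lt x y : le lt x y -> ~ lt y x.
Proof. intros [H|H] H'; subst. exact (lt_asym _ _ H H'). exact (lt_irrefl _ H'). Qed.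
Lemma le_or_lt x y : le lt x y \/ lt y x.
Proof. destruct (lt_trichotomy x y) as [h|[h|h]]; [left; left|left; right|right]; auto. Qed.
Lemma le_antisym x y : le lt x y -> le lt y x -> x = y.
Proof. intros [H|H] H'; auto. exfalso; exact (le_not_lt _ _ H' H). Qed.

Lemma exists_least (P : O -> Prop) :
  (exists x, P x) -> exists x, P x /\ forall y, P y -> le lt x y.
Proof.
  intros [x Hx]. revert Hx. induction x as [x IH] using (well_founded_ind lt_wf). intros Hx.
  destruct (classic (exists y, P y /\ lt y x)) as [[y [Py Hy]]|N].
  - exact (IH y Hy Py).
  - exists x. split; auto. intros y Py. apply not_lt_le. intro H. apply N. eauto.
Qed.

(* Junk value: [least P] is unspecified when [P] is empty. *)
Definition least (P : O -> Prop) : O :=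
  epsilon inh (fun x => P x /\ forall y, P y -> le lt x y).

Lemma least_spec P : (exists x, P x) -> P (least P) /\ forall y, P y -> le lt (least P) y.
Proof. intros H. unfold least. apply epsilon_spec, exists_least, H. Qed.
Lemma least_holds P x : P x -> P (least P).
Proof. intros H. apply (least_spec P); eauto. Qed.
Lemma least_le P x : P x -> le lt (least P) x.
Proof. intros H. apply (least_spec P); eauto. Qed.

Definition choose {A : Type} (a : A) (P : A -> Prop) : A := epsilon (inhabits a) P.
Lemma choose_spec {A : Type} (a : A) (P : A -> Prop) : (exists x, P x) -> P (choose a P).
Proof. apply epsilon_spec. Qed.

Section Rank.
Variable T : Type.
Variable R : T -> T -> Prop.
Hypothesis Rwf : well_founded R.
Hypothesis Rtrans : forall a b c, R a b -> R b c -> R a c.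
Variable X : T -> Prop.

Definition rank : T -> O :=
  Fix Rwf (fun _ => O) (fun t rec => least (fun e => forall s (H : R s t), X s -> lt (rec s H) e)).

Lemma rank_unfold t : rank t = least (fun e => forall s, R s t -> X s -> lt (rank s) e).
Proof.
  unfold rank at 1. rewrite Fix_eq; [reflexivity|].
  intros x f g Hfg.
  replace g with f; [reflexivity|].
  apply functional_extensionality_dep; intro y. apply functional_extensionality_dep; intro p. apply Hfg.
Qed.

Definition rank_bounded t := exists e, forall s, R s t -> X s -> lt (rank s) e.

Lemma rank_lt t s : rank_bounded t -> R s t -> X s -> lt (rank s) (rank t).
Proof.
  intros [e He] Hs Xs. rewrite (rank_unfold t).
  apply (least_holds (fun e => forall s, R s t -> X s -> lt (rank s) e) e He); auto.
Qed.

Lemma rank_le t e : (forall s, R s t -> X s -> lt (rank s) e) -> le lt (rank t) e.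
Proof. intros H. rewrite rank_unfold. apply least_le. exact H. Qed.

Lemma rank_onto t : X t -> forall z, lt z (rank t) -> exists s, X s /\ R s t /\ rank s = z.
Proof.
  induction t as [t IH] using (well_founded_ind Rwf). intros Xt z Hz.
  destruct (classic (exists s, R s t /\ X s /\ le lt z (rank s))) as [[s [Rs [Xs [Hl|He]]]]|N].
  - destruct (IH s Rs Xs z Hl) as [s' [Xs' [R' E]]]. eauto.
  - eauto.
  - exfalso. refine (le_not_lt _ _ (rank_le t z _) Hz). intros s Rs Xs.
    destruct (classic (lt (rank s) z)) as [h|h]; auto.
    exfalso. apply N. exists s. auto using not_lt_le.
Qed.
End Rank.

Lemma order_type_exists (X : O -> Prop) b :
  (forall x, X x -> lt x b) -> exists e, has_order_type lt X e.
Proof.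
  intros Hb.
  set (r := rank O lt lt_wf X).
  assert (Hr : forall x, le lt (r x) x).
  { intro x. induction x as [x IH] using (well_founded_ind lt_wf).
    apply rank_le. intros s Hs Xs. eapply le_lt_trans; [apply IH|]; auto. }
  assert (Hbd : forall x, rank_bounded O lt lt_wf X x).
  { intro x. exists x. intros s Hs _. eapply le_lt_trans; [apply Hr|exact Hs]. }
  set (P := fun e => forall x, X x -> lt (r x) e).
  assert (HP : P (least P)).
  { apply (least_holds P b). intros x Xx. eapply le_lt_trans; [apply Hr|auto]. }
  exists (least P), r. split; [exact HP|split].
  - intros x y Xx Xy. split; [intros H; apply rank_lt; auto|].
    intros H. destruct (lt_trichotomy x y) as [h|[h|h]]; auto; exfalso.
    + subst. exact (lt_irrefl _ H).
    + apply (lt_asym _ _ H). apply rank_lt; auto.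
  - intros y Hy.
    destruct (classic (forall x, X x -> lt (r x) y)) as [A|A].
    + exfalso. exact (le_not_lt _ _ (least_le P y A) Hy).
    + apply not_all_ex_not in A. destruct A as [x A].
      apply imply_to_and in A. destruct A as [Xx A]. apply not_lt_le in A.
      destruct A as [A|A].
      * destruct (rank_onto O lt lt_wf lt_trans X x Xx y A) as [s [Xs [_ E]]]. eauto.
      * eauto.
Qed.

Lemma order_type_segment e : has_order_type lt (fun x => lt x e) e.
Proof.
  exists (fun x => x). split; auto. split; [intros; tauto|]. intros y Hy; exists y; auto.
Qed.

Lemma increasing_ge_id (f : O -> O) e :
  (forall x y, lt x e -> lt y e -> lt x y -> lt (f x) (f y)) ->
  forall z, lt z e -> le lt z (f z).
Proof.
  intros Hinc z. induction z as [z IH] using (well_founded_ind lt_wf). intros Hz.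
  apply not_lt_le. intro H.
  assert (Hfz : lt (f z) e) by (eapply lt_trans; eauto).
  exact (le_not_lt _ _ (IH (f z) H Hfz) (Hinc _ _ Hfz Hz H)).
Qed.

Lemma order_type_le_embedding (X Y : O -> Prop) e e' (g : O -> O) :
  has_order_type lt X e -> has_order_type lt Y e' ->
  (forall x, X x -> Y (g x)) -> (forall x y, X x -> X y -> lt x y -> lt (g x) (g y)) ->
  le lt e e'.
Proof.
  intros [hX [HX1 [HX2 HX3]]] [hY [HY1 [HY2 HY3]]] Hg1 Hg2.
  set (xz := fun z => choose z (fun x => X x /\ hX x = z)).
  assert (Hxz : forall z, lt z e -> X (xz z) /\ hX (xz z) = z).
  { intros z Hz. apply choose_spec. destruct (HX3 z Hz) as [x [A B]]. eauto. }
  set (f := fun z => hY (g (xz z))).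
  assert (Hinc : forall x y, lt x e -> lt y e -> lt x y -> lt (f x) (f y)).
  { intros x y Hx Hy Hxy. destruct (Hxz x Hx) as [A1 B1]. destruct (Hxz y Hy) as [A2 B2].
    apply (HY2 _ _ (Hg1 _ A1) (Hg1 _ A2)), Hg2, (HX2 _ _ A1 A2); auto. rewrite B1, B2; auto. }
  apply not_lt_le. intro H.
  apply (le_not_lt _ _ (increasing_ge_id f e Hinc e' H)).
  apply HY1, Hg1, (Hxz e' H).
Qed.

Lemma order_type_le_subset X Y e e' : has_order_type lt X e -> has_order_type lt Y e' ->
  (forall x, X x -> Y x) -> le lt e e'.
Proof. intros. apply (order_type_le_embedding X Y e e' (fun x => x)); auto. Qed.

Lemma order_type_image_le (Y : O -> Prop) (g : O -> O) e d :
  has_order_type lt Y e ->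
  has_order_type lt (fun a => exists y, Y y /\ a = g y) d ->
  (forall y y', Y y -> Y y' -> le lt y y' -> le lt (g y) (g y')) ->
  le lt d e.
Proof.
  intros HY Hd Hg.
  set (sel := fun a => least (fun y => Y y /\ a = g y)).
  assert (Hsel : forall a, (exists y, Y y /\ a = g y) -> Y (sel a) /\ a = g (sel a)).
  { intros a [y Hy]. exact (least_holds (fun y => Y y /\ a = g y) y Hy). }
  apply (order_type_le_embedding _ Y d e sel Hd HY); [intros a Ha; apply Hsel, Ha|].
  intros a1 a2 A1 A2 H12. destruct (Hsel a1 A1) as [Y1 E1]. destruct (Hsel a2 A2) as [Y2 E2].
  destruct (le_or_lt (sel a2) (sel a1)) as [h|h]; auto. exfalso.
  pose proof (Hg _ _ Y2 Y1 h) as H. rewrite <- E1, <- E2 in H. exact (le_not_lt _ _ H H12).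
Qed.

Lemma order_iso_injective (X : O -> Prop) (h : O -> O) :
  (forall x y, X x -> X y -> lt x y <-> lt (h x) (h y)) ->
  forall x y, X x -> X y -> h x = h y -> x = y.
Proof.
  intros H x y Xx Xy E. destruct (lt_trichotomy x y) as [a|[a|a]]; auto; exfalso.
  - apply (H x y Xx Xy) in a. rewrite E in a. exact (lt_irrefl _ a).
  - apply (H y x Xy Xx) in a. rewrite E in a. exact (lt_irrefl _ a).
Qed.

Definition injects a b := exists f : O -> O,
  (forall x, lt x a -> lt (f x) b) /\ (forall x y, lt x a -> lt y a -> f x = f y -> x = y).

Lemma injects_trans a b c : injects a b -> injects b c -> injects a c.
Proof.
  intros [f [F1 F2]] [g [G1 G2]]. exists (fun x => g (f x)). split; auto.
Qed.

Lemma injects_le a b : le lt a b -> injects a b.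
Proof. intros H. exists (fun x => x). split; auto. intros; eapply lt_le_trans; eauto. Qed.

Lemma equipotent_refl a : equipotent lt a a.
Proof. exists (fun x => x). split; [|split]; auto. intros y Hy; exists y; auto. Qed.

Lemma equipotent_trans a b c : equipotent lt a b -> equipotent lt b c -> equipotent lt a c.
Proof.
  intros [h [H1 [H2 H3]]] [g [G1 [G2 G3]]]. exists (fun x => g (h x)). split; [|split]; auto.
  intros z Hz. destruct (G3 z Hz) as [y [Hy E]]. destruct (H3 y Hy) as [x [Hx E']].
  exists x. split; congruence.
Qed.

Lemma injects_equipotent_inv a b : equipotent lt a b -> injects b a.
Proof.
  intros [h [H1 [H2 H3]]].
  set (g := fun y => choose y (fun x => lt x a /\ h x = y)).
  assert (G : forall y, lt y b -> lt (g y) a /\ h (g y) = y) by (intros; apply choose_spec; auto).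
  exists g. split; [intros y Hy; apply G; auto|].
  intros x y Hx Hy E. destruct (G x Hx) as [_ A]. destruct (G y Hy) as [_ B]. congruence.
Qed.

Lemma cardinal_le_injects mu d : is_cardinal lt mu -> injects mu d -> le lt mu d.
Proof.
  intros Hc [f [F1 F2]]. apply not_lt_le. intro Hd.
  set (I := fun y => exists x, lt x mu /\ f x = y).
  destruct (order_type_exists I d) as [e He]; [intros y [x [Hx E]]; subst; auto|].
  assert (Hed : le lt e d).
  { apply (order_type_le_subset I (fun x => lt x d) e d He (order_type_segment d)).
    intros y [x [Hx E]]; subst; auto. }
  destruct He as [r [R1 [R2 R3]]].
  set (g := fun z => choose z (fun x => lt x mu /\ r (f x) = z)).
  assert (G : forall z, lt z e -> lt (g z) mu /\ r (f (g z)) = z).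
  { intros z Hz. apply choose_spec. destruct (R3 z Hz) as [y [[x [Hx E]] E']]. subst. eauto. }
  apply (Hc e (le_lt_trans _ _ _ Hed Hd)).
  exists g. split; [|split].
  - intros z Hz. apply G; auto.
  - intros x y Hx Hy E. destruct (G x Hx) as [_ A]. destruct (G y Hy) as [_ B]. congruence.
  - intros y Hy. assert (Iy : I (f y)) by (exists y; auto).
    exists (r (f y)). split; [apply R1; auto|].
    destruct (G (r (f y)) (R1 _ Iy)) as [A B].
    apply F2; auto. apply (order_iso_injective I r R2); auto. exists (g (r (f y))); auto.
Qed.

Definition card g := least (fun d => equipotent lt d g).

Lemma card_spec g : injects g (card g) /\ le lt (card g) g /\ is_cardinal lt (card g).
Proof.
  pose proof (least_holds (fun d => equipotent lt d g) g (equipotent_refl g)) as E.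
  split; [apply injects_equipotent_inv, E|split].
  - apply least_le, equipotent_refl.
  - intros b Hb Eb. apply (le_not_lt _ _ (least_le (fun d => equipotent lt d g) b
      (equipotent_trans _ _ _ Eb E)) Hb).
Qed.

Definition zero := least (fun _ => True).

Lemma zero_le x : le lt zero x.
Proof. apply least_le; exact I. Qed.
Lemma zero_is_zero : is_zero lt zero.
Proof. intros x H. exact (le_not_lt _ _ (zero_le x) H). Qed.
Lemma zero_lt_of_nonzero x : ~ is_zero lt x -> lt zero x.
Proof.
  intros Z. destruct (le_or_lt x zero) as [[H|H]|H]; auto; exfalso.
  - exact (zero_is_zero _ H).
  - subst. exact (Z zero_is_zero).
Qed.

Definition succ x := least (lt x).

Lemma lt_succ x y : lt x y -> lt x (succ x).
Proof. intros H. exact (least_holds (lt x) y H). Qed.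
Lemma succ_le x y : lt x y -> le lt (succ x) y.
Proof. apply least_le. Qed.
Lemma succ_is_succ x y : lt x y -> is_succ lt x (succ x).
Proof. intros H. split; [eapply lt_succ; eauto|]. intros c Hc. apply succ_le, Hc. Qed.
Lemma is_succ_succ b x : is_succ lt b x -> x = succ b.
Proof.
  intros [H1 H2]. apply le_antisym; [apply H2; eapply lt_succ; eauto|apply succ_le, H1].
Qed.
Lemma is_succ_lt_le b x y : is_succ lt b x -> lt y x -> le lt y b.
Proof. intros [H1 H2] Hy. apply not_lt_le. intro H. exact (le_not_lt _ _ (H2 y H) Hy). Qed.

Lemma zero_limit_or_succ x : is_zero lt x \/ is_limit lt x \/ exists b, is_succ lt b x.
Proof.
  destruct (classic (is_zero lt x)) as [Z|Z]; auto. right.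
  destruct (classic (forall b, lt b x -> exists c, lt b c /\ lt c x)) as [L|L].
  - left. split; auto.
  - right. apply not_all_ex_not in L. destruct L as [b L]. apply imply_to_and in L.
    destruct L as [Hb L]. exists b. split; auto.
    intros c Hc. apply not_lt_le. intro Hcx. apply L. eauto.
Qed.

Lemma limit_succ_lt w x : is_limit lt w -> lt x w -> lt (succ x) w.
Proof.
  intros [_ L] Hx. destruct (L x Hx) as [c [A B]]. eapply le_lt_trans; [apply succ_le|]; eauto.
Qed.

Lemma succ_not_limit b x : is_succ lt b x -> ~ is_limit lt x.
Proof.
  intros [H1 H2] [_ L]. destruct (L b H1) as [c [A B]]. exact (le_not_lt _ _ (H2 c A) B).
Qed.

Definition omega := least (is_limit lt).

Lemma omega_least w : is_limit lt w -> le lt omega w.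
Proof. apply least_le. Qed.

Section Omega.
Hypothesis Hlim : exists w, is_limit lt w.

Lemma omega_limit : is_limit lt omega.
Proof. destruct Hlim as [w Hw]. exact (least_holds _ w Hw). Qed.
Lemma zero_lt_omega : lt zero omega.
Proof. apply zero_lt_of_nonzero, omega_limit. Qed.
Lemma lt_omega_cases y : lt y omega -> y = zero \/ exists x, lt x y /\ y = succ x.
Proof.
  intros Hy. destruct (zero_limit_or_succ y) as [Z|[L|[b S]]].
  - left. apply le_antisym; [apply not_lt_le, Z|apply zero_le].
  - exfalso. exact (le_not_lt _ _ (omega_least y L) Hy).
  - right. exists b. split; [apply S|apply is_succ_succ, S].
Qed.

Definition shift x := if excluded_middle_informative (lt x omega) then succ x else x.

Lemma shift_increasing x y : lt x y -> lt (shift x) (shift y).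
Proof.
  intros Hxy. unfold shift.
  destruct (excluded_middle_informative (lt x omega)) as [hx|hx];
  destruct (excluded_middle_informative (lt y omega)) as [hy|hy].
  - apply (le_lt_trans _ y); [apply succ_le, Hxy|apply (lt_succ y omega hy)].
  - apply (lt_le_trans _ omega); [apply limit_succ_lt; [apply omega_limit|exact hx]|].
    apply not_lt_le, hy.
  - exfalso. exact (hx (lt_trans _ _ _ Hxy hy)).
  - exact Hxy.
Qed.

Lemma zero_lt_shift x : lt zero (shift x).
Proof.
  unfold shift. destruct (excluded_middle_informative (lt x omega)) as [hx|hx].
  - apply (le_lt_trans _ x); [apply zero_le|apply (lt_succ x omega hx)].
  - apply (lt_le_trans _ omega); [apply zero_lt_omega|apply not_lt_le, hx].
Qed.

Lemma shift_lt x m : le lt omega m -> lt x m -> lt (shift x) m.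
Proof.
  intros Hwm Hx. unfold shift. destruct (excluded_middle_informative (lt x omega)) as [hx|hx]; auto.
  apply (lt_le_trans _ omega); [apply limit_succ_lt; [apply omega_limit|exact hx]|exact Hwm].
Qed.

(* [shift] frees [zero], which then receives [m]. *)
Lemma injects_succ_infinite m mu : le lt omega m -> is_succ lt m mu -> injects mu m.
Proof.
  intros Hwm S.
  exists (fun x => if excluded_middle_informative (x = m) then zero else shift x). split.
  - intros x Hx. destruct (excluded_middle_informative (x = m)) as [E|E].
    + apply (lt_le_trans _ omega); [apply zero_lt_omega|exact Hwm].
    + apply shift_lt; [exact Hwm|]. destruct (is_succ_lt_le m mu x S Hx); [auto|contradiction].
  - intros x y _ _.
    destruct (excluded_middle_informative (x = m)) as [Ex|Ex];
    destruct (excluded_middle_informative (y = m)) as [Ey|Ey]; intros E.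
    + congruence.
    + exfalso. apply (lt_irrefl zero). rewrite E at 2. apply zero_lt_shift.
    + exfalso. apply (lt_irrefl zero). rewrite <- E at 2. apply zero_lt_shift.
    + destruct (lt_trichotomy x y) as [h|[h|h]]; auto; exfalso;
        apply shift_increasing in h; rewrite E in h; exact (lt_irrefl _ h).
Qed.

Lemma infinite_cardinal_limit mu : is_cardinal lt mu -> le lt omega mu -> is_limit lt mu.
Proof.
  intros Hc Hw. destruct (zero_limit_or_succ mu) as [Z|[L|[m S]]]; [exfalso|exact L|exfalso].
  - exact (Z zero (lt_le_trans _ _ _ zero_lt_omega Hw)).
  - assert (Hwm : le lt omega m).
    { destruct Hw as [Hw|Hw]; [apply (is_succ_lt_le m mu); auto|].
      subst. destruct (succ_not_limit _ _ S omega_limit). }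
    exact (le_not_lt _ _ (cardinal_le_injects mu m Hc (injects_succ_infinite m mu Hwm S)) (proj1 S)).
Qed.

Fixpoint nat_ord (n : nat) : O := match n with 0 => zero | S k => succ (nat_ord k) end.

Lemma nat_ord_lt_omega n : lt (nat_ord n) omega.
Proof.
  induction n; simpl; [apply zero_lt_omega|apply limit_succ_lt; [apply omega_limit|exact IHn]].
Qed.

Lemma nat_ord_lt n m : (n < m)%nat -> lt (nat_ord n) (nat_ord m).
Proof.
  assert (HS : forall k, lt (nat_ord k) (nat_ord (S k))).
  { intro k. exact (lt_succ _ _ (nat_ord_lt_omega k)). }
  induction m; intros H; [lia|].
  destruct (Nat.eq_dec n m); [subst; apply HS|].
  apply (lt_trans _ (nat_ord m)); [apply IHm; lia|apply HS].
Qed.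

Lemma nat_ord_lt_iff n m : (n < m)%nat <-> lt (nat_ord n) (nat_ord m).
Proof.
  split; [apply nat_ord_lt|]. intros H. destruct (Nat.lt_total n m) as [a|[a|a]]; auto; exfalso.
  - subst. exact (lt_irrefl _ H).
  - exact (lt_asym _ _ H (nat_ord_lt _ _ a)).
Qed.

Lemma nat_ord_inj n m : nat_ord n = nat_ord m -> n = m.
Proof.
  intros E. destruct (Nat.lt_total n m) as [a|[a|a]]; auto; exfalso;
    apply nat_ord_lt in a; rewrite E in a; exact (lt_irrefl _ a).
Qed.

Lemma nat_ord_onto y : lt y omega -> exists n, nat_ord n = y.
Proof.
  induction y as [y IH] using (well_founded_ind lt_wf). intros Hy.
  destruct (lt_omega_cases y Hy) as [E|[x [Hx E]]]; [exists 0%nat; auto|].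
  destruct (IH x Hx (lt_trans _ _ _ Hx Hy)) as [n En]. exists (S n). simpl. congruence.
Qed.

Definition pairs_inject nu nu' := exists pi : O -> O -> O,
  (forall a b, lt a nu -> lt b nu -> lt (pi a b) nu') /\
  (forall a b a' b', lt a nu -> lt b nu -> lt a' nu -> lt b' nu ->
     pi a b = pi a' b' -> a = a' /\ b = b').

Lemma pairs_inject_finite n : pairs_inject (nat_ord n) (nat_ord (n * n)).
Proof.
  set (idx := fun y => choose 0%nat (fun k => nat_ord k = y)).
  assert (Hidx : forall a, lt a (nat_ord n) -> nat_ord (idx a) = a /\ (idx a < n)%nat).
  { intros a Ha.
    assert (E : nat_ord (idx a) = a).
    { apply (choose_spec 0%nat (fun k => nat_ord k = a)), nat_ord_onto.
      exact (lt_trans _ _ _ Ha (nat_ord_lt_omega n)). }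
    split; [exact E|]. apply nat_ord_lt_iff. congruence. }
  exists (fun a b => nat_ord (n * idx a + idx b)). split.
  - intros a b Ha Hb. destruct (Hidx a Ha) as [_ A]. destruct (Hidx b Hb) as [_ B].
    apply nat_ord_lt. nia.
  - intros a b a' b' Ha Hb Ha' Hb' E. apply nat_ord_inj in E.
    destruct (Hidx a Ha) as [A1 A2]. destruct (Hidx b Hb) as [B1 B2].
    destruct (Hidx a' Ha') as [A1' A2']. destruct (Hidx b' Hb') as [B1' B2'].
    destruct (Nat.div_mod_unique n (idx a) (idx a') (idx b) (idx b') B2 B2' E) as [E1 E2].
    split; congruence.
Qed.

Definition omax a b := if excluded_middle_informative (lt a b) then b else a.

Lemma omax_l a b : le lt a (omax a b).
Proof. unfold omax. destruct (excluded_middle_informative (lt a b)); [left|right]; auto. Qed.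
Lemma omax_r a b : le lt b (omax a b).
Proof.
  unfold omax. destruct (excluded_middle_informative (lt a b)); [apply le_refl|apply not_lt_le; auto].
Qed.
Lemma omax_lt a b mu : lt a mu -> lt b mu -> lt (omax a b) mu.
Proof. unfold omax. destruct (excluded_middle_informative (lt a b)); auto. Qed.

(* Gödel's ordering of pairs. *)
Definition pair_lt (s t : O * O) : Prop :=
  lt (omax (fst s) (snd s)) (omax (fst t) (snd t)) \/
  (omax (fst s) (snd s) = omax (fst t) (snd t) /\
   (lt (fst s) (fst t) \/ (fst s = fst t /\ lt (snd s) (snd t)))).

Lemma pair_lt_wf : well_founded pair_lt.
Proof.
  assert (H : forall m a b, omax a b = m -> Acc pair_lt (a, b)).
  { intros m. induction m as [m IHm] using (well_founded_ind lt_wf).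
    intros a. induction a as [a IHa] using (well_founded_ind lt_wf).
    intros b. induction b as [b IHb] using (well_founded_ind lt_wf).
    intros Hm. constructor. intros [c d] H. unfold pair_lt in H; simpl in H.
    destruct H as [H|[H1 [H2|[H2 H3]]]].
    - subst m. eapply IHm; [exact H|reflexivity].
    - eapply IHa; [exact H2|congruence].
    - subst c. apply IHb; [exact H3|congruence]. }
  intros [a b]. eapply H. reflexivity.
Qed.

Lemma pair_lt_trans s t u : pair_lt s t -> pair_lt t u -> pair_lt s u.
Proof.
  unfold pair_lt. intros [A|[A1 A2]] [B|[B1 B2]].
  - left. eapply lt_trans; eauto.
  - left. rewrite <- B1. auto.
  - left. rewrite A1. auto.
  - right. split; [congruence|].
    destruct A2 as [A2|[A2 A3]]; destruct B2 as [B2|[B2 B3]].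
    + left. eapply lt_trans; eauto.
    + left. rewrite <- B2. auto.
    + left. rewrite A2. auto.
    + right. split; [congruence|eapply lt_trans; eauto].
Qed.

Lemma pair_lt_trichotomy s t : pair_lt s t \/ s = t \/ pair_lt t s.
Proof.
  destruct s as [a b], t as [c d]. unfold pair_lt; simpl.
  destruct (lt_trichotomy (omax a b) (omax c d)) as [h|[h|h]]; auto.
  destruct (lt_trichotomy a c) as [h1|[h1|h1]]; [left; right; auto| |right; right; right; auto].
  subst c. destruct (lt_trichotomy b d) as [h2|[h2|h2]].
  - left. right. auto.
  - subst. auto.
  - right. right. right. auto.
Qed.

Lemma pair_lt_components s t :
  pair_lt s t -> le lt (fst s) (omax (fst t) (snd t)) /\ le lt (snd s) (omax (fst t) (snd t)).
Proof.
  intros H. assert (M : le lt (omax (fst s) (snd s)) (omax (fst t) (snd t))).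
  { destruct H as [H|[H _]]; [left|right]; auto. }
  split; eapply le_trans; eauto; [apply omax_l|apply omax_r].
Qed.

Lemma pairs_inject_below mu :
  le lt omega mu ->
  (forall nu, lt nu mu -> is_cardinal lt nu -> le lt omega nu -> pairs_inject nu nu) ->
  forall m, lt m mu -> exists nu', lt nu' mu /\ pairs_inject m nu'.
Proof.
  intros Hw IH m Hm. destruct (card_spec m) as [[h [H1 H2]] [Hle Hcard]].
  assert (Hn : exists nu', lt nu' mu /\ pairs_inject (card m) nu').
  { destruct (classic (lt (card m) omega)) as [Hf|Hf].
    - destruct (nat_ord_onto _ Hf) as [n En]. exists (nat_ord (n * n)). rewrite <- En.
      split; [exact (lt_le_trans _ _ _ (nat_ord_lt_omega _) Hw)|apply pairs_inject_finite].
    - exists (card m). assert (Hnu : lt (card m) mu) by (eapply le_lt_trans; eauto).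
      split; [exact Hnu|]. apply IH; auto. apply not_lt_le, Hf. }
  destruct Hn as [nu' [Hnu' [pi [P1 P2]]]].
  exists nu'. split; [exact Hnu'|]. exists (fun a b => pi (h a) (h b)). split; [auto|].
  intros a b a' b' Ha Hb Ha' Hb' E. destruct (P2 _ _ _ _ (H1 _ Ha) (H1 _ Hb) (H1 _ Ha') (H1 _ Hb') E).
  auto.
Qed.

Definition square mu (t : O * O) := lt (fst t) mu /\ lt (snd t) mu.

Definition pair_rank mu := rank (O * O) pair_lt pair_lt_wf (square mu).

(* The pairs below [(a, b)] lie in [m * m] for [m = max a b + 1 < mu], and
   [m * m] injects into some [nu' < mu]. *)
Lemma pair_rank_lt mu : is_cardinal lt mu -> is_limit lt mu ->
  (forall m, lt m mu -> exists nu', lt nu' mu /\ pairs_inject m nu') ->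
  forall t, square mu t -> lt (pair_rank mu t) mu /\ rank_bounded (O * O) pair_lt pair_lt_wf (square mu) t.
Proof.
  intros Hc Lim Small t. induction t as [t IH] using (well_founded_ind pair_lt_wf). intros Xt.
  assert (Bd : rank_bounded (O * O) pair_lt pair_lt_wf (square mu) t).
  { exists mu. intros s Hs Xs. apply (IH s Hs Xs). }
  split; [|exact Bd].
  destruct (le_or_lt mu (pair_rank mu t)) as [Hge|Hlt]; [exfalso|exact Hlt].
  destruct t as [a b]. destruct Xt as [Ha Hb]. simpl in Ha, Hb.
  set (m := succ (omax a b)).
  assert (Hm : lt m mu) by (apply limit_succ_lt; [exact Lim|apply omax_lt; auto]).
  assert (Hmm : lt (omax a b) m) by exact (lt_succ _ _ (omax_lt a b mu Ha Hb)).
  destruct (Small m Hm) as [nu' [Hnu' [pi [P1 P2]]]].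
  set (sel := fun z => choose (a, b) (fun s => square mu s /\ pair_lt s (a, b) /\ pair_rank mu s = z)).
  assert (Hsel : forall z, lt z mu ->
            square mu (sel z) /\ pair_lt (sel z) (a, b) /\ pair_rank mu (sel z) = z).
  { intros z Hz. apply choose_spec.
    destruct (rank_onto (O * O) pair_lt pair_lt_wf pair_lt_trans (square mu) (a, b) (conj Ha Hb) z
                (lt_le_trans _ _ _ Hz Hge)) as [s [Xs [Gs Es]]]. eauto. }
  assert (Hsm : forall z, lt z mu -> lt (fst (sel z)) m /\ lt (snd (sel z)) m).
  { intros z Hz. destruct (Hsel z Hz) as [_ [Gs _]].
    destruct (pair_lt_components _ _ Gs) as [A B]. split; eapply le_lt_trans; eauto. }
  refine (le_not_lt _ _ (cardinal_le_injects mu nu' Hc _) Hnu').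
  exists (fun z => pi (fst (sel z)) (snd (sel z))). split.
  - intros z Hz. destruct (Hsm z Hz). apply P1; auto.
  - intros z z' Hz Hz' E. destruct (Hsm z Hz) as [A B]. destruct (Hsm z' Hz') as [A' B'].
    destruct (P2 _ _ _ _ A B A' B' E) as [E1 E2].
    assert (Es : sel z = sel z') by (destruct (sel z), (sel z'); simpl in *; congruence).
    destruct (Hsel z Hz) as [_ [_ R1]]. destruct (Hsel z' Hz') as [_ [_ R2]]. congruence.
Qed.

Theorem hessenberg mu : is_cardinal lt mu -> le lt omega mu -> pairs_inject mu mu.
Proof.
  induction mu as [mu IHmu] using (well_founded_ind lt_wf). intros Hc Hw.
  pose proof (pair_rank_lt mu Hc (infinite_cardinal_limit mu Hc Hw)
                (pairs_inject_below mu Hw (fun nu Hnu => IHmu nu Hnu))) as Rank.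
  exists (fun a b => pair_rank mu (a, b)). split; [intros a b Ha Hb; apply (Rank (a, b)); split; auto|].
  intros a b a' b' Ha Hb Ha' Hb' E.
  assert (X1 : square mu (a, b)) by (split; auto). assert (X2 : square mu (a', b')) by (split; auto).
  destruct (pair_lt_trichotomy (a, b) (a', b')) as [h|[h|h]]; [exfalso|inversion h; auto|exfalso].
  - pose proof (rank_lt _ _ _ _ _ _ (proj2 (Rank _ X2)) h X1) as H.
    unfold pair_rank in E. rewrite E in H. exact (lt_irrefl _ H).
  - pose proof (rank_lt _ _ _ _ _ _ (proj2 (Rank _ X1)) h X2) as H.
    unfold pair_rank in E. rewrite E in H. exact (lt_irrefl _ H).
Qed.

End Omega.

Lemma is_cof_unique a c c' : is_cof lt a c -> is_cof lt a c' -> c = c'.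
Proof.
  intros [[A [HA1 HA2]] H1] [[A' [HA1' HA2']] H1']. apply le_antisym.
  - apply (H1 c' A'); auto.
  - apply (H1' c A); auto.
Qed.

Lemma regular_bounded_image mu (X : O -> Prop) d (f : O -> O) :
  is_cardinal lt mu -> is_cof lt mu mu -> has_order_type lt X d -> lt d mu ->
  (forall x, X x -> lt (f x) mu) -> exists u, lt u mu /\ forall x, X x -> lt (f x) u.
Proof.
  intros Hc [_ Hmin] [rX [X1 [X2 X3]]] Hd Hf. apply NNPP. intro N.
  set (U := fun y => exists x, X x /\ f x = y).
  assert (UC : cofinal_in lt U mu).
  { split; [intros y [x [Xx <-]]; auto|].
    intros y Hy. apply NNPP. intro Ny. apply N. exists y. split; auto. intros x Xx.
    apply NNPP. intro Hx. apply Ny. exists (f x). split; [exists x; auto|apply not_lt_le, Hx]. }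
  destruct (order_type_exists U mu (proj1 UC)) as [e He].
  pose proof (Hmin e U UC He) as Hme.
  destruct He as [rU [U1 [U2 U3]]].
  set (sel := fun z => choose z (fun x => X x /\ rU (f x) = z)).
  assert (Hsel : forall z, lt z mu -> X (sel z) /\ rU (f (sel z)) = z).
  { intros z Hz. apply choose_spec.
    destruct (U3 z (lt_le_trans _ _ _ Hz Hme)) as [y [[x [Xx <-]] E]]. eauto. }
  refine (le_not_lt _ _ (cardinal_le_injects mu d Hc _) Hd).
  exists (fun z => rX (sel z)). split; [intros z Hz; apply X1, Hsel, Hz|].
  intros z z' Hz Hz' E. destruct (Hsel z Hz) as [A1 B1]. destruct (Hsel z' Hz') as [A2 B2].
  assert (sel z = sel z') by (apply (order_iso_injective X rX X2); auto). congruence.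
Qed.

Lemma cof_le_monotone_cofinal alpha c (Y : O -> Prop) (g : O -> O) e :
  is_cof lt alpha c -> has_order_type lt Y e ->
  (forall y, Y y -> lt (g y) alpha) ->
  (forall b, lt b alpha -> exists y, Y y /\ le lt b (g y)) ->
  (forall y y', Y y -> Y y' -> le lt y y' -> le lt (g y) (g y')) ->
  le lt c e.
Proof.
  intros [_ Hmin] HY Hg Hcof Hmono.
  set (A := fun a => exists y, Y y /\ a = g y).
  destruct (order_type_exists A alpha) as [d Hd]; [intros a [y [Yy ->]]; auto|].
  apply (le_trans _ d).
  - apply (Hmin d A); auto. split; [intros a [y [Yy ->]]; auto|].
    intros b Hb. destruct (Hcof b Hb) as [y [Yy Hle]]. exists (g y). split; [exists y|]; auto.
  - exact (order_type_image_le Y g e d HY Hd Hmono).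
Qed.

(* Otherwise the least bounds of the fibres [J y <= j], for [j < kap], would form
   a monotone cofinal map from [kap] to [alpha]. *)
Lemma cofinal_pigeonhole alpha c kap (Y : O -> Prop) (g J : O -> O) :
  is_cof lt alpha c -> lt kap c ->
  (forall y, Y y -> lt (g y) alpha) ->
  (forall b, lt b alpha -> exists y, Y y /\ le lt b (g y)) ->
  (forall y, Y y -> lt (J y) kap) ->
  exists j, lt j kap /\
    forall b, lt b alpha -> exists y, Y y /\ le lt (J y) j /\ le lt b (g y).
Proof.
  intros Hcof Hkc Hg HY HJ. apply NNPP. intro N.
  set (bounds := fun j u => lt u alpha /\ forall y, Y y -> le lt (J y) j -> lt (g y) u).
  assert (Hb : forall j, lt j kap -> exists u, bounds j u).
  { intros j Hj. apply NNPP. intro Nu. apply N. exists j. split; auto.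
    intros b Hb. apply NNPP. intro Nb. apply Nu. exists b. split; auto.
    intros y Yy Hy. apply NNPP. intro Hyb. apply Nb. exists y. auto using not_lt_le. }
  set (h := fun j => least (bounds j)).
  assert (Hh : forall j, lt j kap -> bounds j (h j)).
  { intros j Hj. destruct (Hb j Hj) as [u Hu]. exact (least_holds _ u Hu). }
  refine (le_not_lt _ _ (cof_le_monotone_cofinal alpha c (fun j => lt j kap) h kap Hcof
            (order_type_segment kap) _ _ _) Hkc).
  - intros j Hj. apply Hh, Hj.
  - intros b Hbl. destruct (HY b Hbl) as [y [Yy Hle]]. exists (J y). split; [auto|].
    left. eapply le_lt_trans; [exact Hle|]. apply (Hh (J y) (HJ y Yy)); auto. apply le_refl.
  - intros j j' Hj Hj' Hjj. apply least_le. destruct (Hh j' Hj') as [H1 H2].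
    split; auto. intros y Yy Hy. apply H2; auto. eapply le_trans; eauto.
Qed.

(* Thinning [A] to the least elements above a cofinal set of order type [c]. *)
Lemma good_point_of_cofinal kap (F : O -> O -> O) alpha c (A : O -> Prop) j :
  is_cof lt alpha c -> cofinal_in lt A alpha -> lt j kap ->
  (forall i, le lt j i -> lt i kap -> forall g d, A g -> A d -> lt g d -> lt (F g i) (F d i)) ->
  good_point lt kap F alpha.
Proof.
  intros Hcof [A1 A2] Hj Hinc.
  pose proof Hcof as [[B [[B1 B2] HB]] Hmin].
  set (m := fun b => least (fun a => A a /\ le lt b a)).
  assert (Hm : forall b, B b -> A (m b) /\ le lt b (m b)).
  { intros b Bb. destruct (A2 b (B1 b Bb)) as [a Ha].
    exact (least_holds (fun a => A a /\ le lt b a) a Ha). }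
  set (A' := fun a => exists b, B b /\ a = m b).
  assert (HA' : cofinal_in lt A' alpha).
  { split; [intros a [b [Bb ->]]; apply A1, (Hm b Bb)|].
    intros y Hy. destruct (B2 y Hy) as [b [Bb Hyb]]. exists (m b).
    split; [exists b; auto|eapply le_trans; [exact Hyb|apply (Hm b Bb)]]. }
  destruct (order_type_exists A' alpha (proj1 HA')) as [d Hd].
  assert (Ed : d = c).
  { apply le_antisym; [|apply (Hmin d A' HA' Hd)].
    apply (order_type_image_le B m c d HB Hd). intros b b' Bb Bb' Hbb.
    apply least_le. split; [apply (Hm b' Bb')|eapply le_trans; [exact Hbb|apply (Hm b' Bb')]]. }
  subst d. exists A', c. split; [exact HA'|split; [exact Hcof|split; [exact Hd|]]].
  exists j. split; auto.
  intros i Hji Hi g d [b [Bb ->]] [b' [Bb' ->]] Hlt. apply Hinc; auto; [apply (Hm b Bb)|apply (Hm b' Bb')].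
Qed.

Lemma good_point_ext kap F F' beta : (forall g i, lt g beta -> lt i kap -> F g i = F' g i) ->
  good_point lt kap F beta -> good_point lt kap F' beta.
Proof.
  intros HF [A [c [[AC1 AC2] [Hc [Hot [j [Hj H]]]]]]].
  exists A, c. split; [split; auto|split; auto; split; auto].
  exists j. split; auto. intros i Hi Hk g d Ag Ad Hgd. rewrite <- !HF; auto.
Qed.

Lemma ltstar_ext kap f g f' g' :
  (forall i, lt i kap -> f i = f' i) -> (forall i, lt i kap -> g i = g' i) ->
  ltstar lt kap f g -> ltstar lt kap f' g'.
Proof.
  intros Hf Hg [j [Hj H]]. exists j. split; auto. intros i Hi Hk. rewrite <- Hf, <- Hg; auto.
Qed.

Lemma ltstar_le_trans kap f g h j : ltstar lt kap f g -> lt j kap ->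
  (forall i, le lt j i -> lt i kap -> le lt (g i) (h i)) -> ltstar lt kap f h.
Proof.
  intros [j1 [Hj1 H1]] Hj H2. destruct (le_or_lt j1 j) as [h12|h12].
  - exists j. split; auto. intros i Hi Hk.
    eapply lt_le_trans; [apply H1; [eapply le_trans; eauto|auto]|auto].
  - exists j1. split; auto. intros i Hi Hk.
    eapply lt_le_trans; [apply H1; auto|apply H2; auto]. eapply le_trans; eauto. left; auto.
Qed.

Lemma succ_decomposition x :
  exists delta k, (is_zero lt delta \/ is_limit lt delta) /\ nsucc lt k delta x.
Proof.
  induction x as [x IH] using (well_founded_ind lt_wf).
  destruct (zero_limit_or_succ x) as [Z|[L|[b Sb]]]; [exists x, 0%nat; simpl; auto..|].
  destruct (IH b (proj1 Sb)) as [d [k [Hd Hk]]]. exists d, (S k). split; auto. simpl. eauto.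
Qed.

Lemma even_or_succ_even x : even_ord lt x \/ forall y, is_succ lt x y -> even_ord lt y.
Proof.
  destruct (succ_decomposition x) as [d [k [Hd Hk]]].
  destruct (Nat.even k) eqn:E; [left; exists d, k; auto|].
  right. intros y Hy. exists d, (S k). split; [auto|split].
  - rewrite Nat.even_succ, <- Nat.negb_even, E. reflexivity.
  - simpl. eauto.
Qed.

Section Strategy.
Variables lambda kappa lplus : O.
Variable lam : O -> O.
Hypothesis Hsing : singular_cardinal lt lambda.
Hypothesis Hcf : is_cof lt lambda kappa.
Hypothesis Hplus : is_succ_cardinal lt lambda lplus.
Hypothesis Hreg : forall i, lt i kappa -> regular_cardinal lt (lam i).
Hypothesis Hinc : forall i j, lt i kappa -> lt j kappa -> lt i j -> lt (lam i) (lam j).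
Hypothesis Hconv : forall b, lt b lambda -> exists i, lt i kappa /\ lt b (lam i).

Lemma exists_limit : exists w, is_limit lt w.
Proof. destruct Hsing as [_ [[w [Wl _]] _]]. eauto. Qed.

Lemma omega_le_lambda : le lt omega lambda.
Proof.
  destruct Hsing as [_ [[w [Wl Wle]] _]].
  exact (le_trans _ _ _ (omega_least w Wl) Wle).
Qed.

Lemma lplus_limit : is_limit lt lplus.
Proof.
  destruct Hplus as [Hc [Hlt _]]. apply (infinite_cardinal_limit exists_limit); auto.
  eapply le_trans; [apply omega_le_lambda|left; exact Hlt].
Qed.

Lemma kappa_lt_lambda : lt kappa lambda.
Proof.
  destruct Hsing as [_ [_ [c [Hc Hcl]]]]. rewrite (is_cof_unique _ _ _ Hcf Hc). exact Hcl.
Qed.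

Lemma zero_lt_kappa : lt zero kappa.
Proof.
  destruct Hcf as [[A [[A1 A2] [h [H1 _]]]] _].
  destruct (A2 zero (lt_le_trans _ _ _ (zero_lt_omega exists_limit) omega_le_lambda)) as [x [Ax _]].
  eapply le_lt_trans; [apply zero_le|apply (H1 x Ax)].
Qed.

Lemma zero_lt_lam i : lt i kappa -> lt zero (lam i).
Proof.
  intros Hi. destruct (Hreg i Hi) as [_ [[w [Wl Wle]] _]].
  exact (lt_le_trans _ _ _ (zero_lt_of_nonzero w (proj1 Wl)) Wle).
Qed.

Lemma injects_lambda_below_lplus g : lt g lplus -> injects g lambda.
Proof.
  intros Hg. destruct (card_spec g) as [Hinj [Hle Hc]].
  apply (injects_trans _ (card g) _ Hinj), injects_le, not_lt_le. intro h.
  destruct Hplus as [_ [_ Hmin]].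
  exact (le_not_lt _ _ (Hmin _ Hc h) (le_lt_trans _ _ _ Hle Hg)).
Qed.

(* Otherwise [lplus] injects into [lambda * lambda], hence into [lambda] (Hessenberg). *)
Lemma lplus_bounded xi (l : O -> O) : le lt xi lambda ->
  (forall eta, lt eta xi -> lt (l eta) lplus) ->
  exists u, lt u lplus /\ forall eta, lt eta xi -> lt (l eta) u.
Proof.
  intros Hxi Hl. apply NNPP. intro N.
  assert (Hc : forall g, lt g lplus -> exists eta, lt eta xi /\ lt g (l eta)).
  { intros g Hg. assert (Hs : lt (succ g) lplus) by (apply limit_succ_lt; [apply lplus_limit|exact Hg]).
    apply NNPP. intro h. apply N. exists (succ g). split; auto. intros eta Heta.
    apply NNPP. intro h'. apply h. exists eta. split; auto.
    exact (lt_le_trans _ _ _ (lt_succ g lplus Hg) (not_lt_le _ _ h')). }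
  set (ef := fun g => choose g (fun eta => lt eta xi /\ lt g (l eta))).
  assert (Hef : forall g, lt g lplus -> lt (ef g) xi /\ lt g (l (ef g))).
  { intros g Hg. apply choose_spec. auto. }
  set (emb := fun eta => choose (fun x : O => x) (fun f => forall x y, lt x (l eta) -> lt y (l eta) ->
        lt (f x) lambda /\ (f x = f y -> x = y))).
  assert (Hemb : forall eta, lt eta xi -> forall x y, lt x (l eta) -> lt y (l eta) ->
        lt (emb eta x) lambda /\ (emb eta x = emb eta y -> x = y)).
  { intros eta Heta. apply choose_spec.
    destruct (injects_lambda_below_lplus (l eta) (Hl eta Heta)) as [f [F1 F2]]. eauto. }
  destruct (hessenberg exists_limit lambda (proj1 Hsing) omega_le_lambda) as [pi [P1 P2]].
  assert (Hinj : injects lplus lambda).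
  { exists (fun g => pi (ef g) (emb (ef g) g)). split.
    - intros g Hg. destruct (Hef g Hg) as [A B].
      apply P1; [exact (lt_le_trans _ _ _ A Hxi)|apply (Hemb _ A g g B B)].
    - intros g g' Hg Hg' E. destruct (Hef g Hg) as [A B]. destruct (Hef g' Hg') as [A' B'].
      destruct (P2 _ _ _ _ (lt_le_trans _ _ _ A Hxi) (proj1 (Hemb _ A g g B B))
                  (lt_le_trans _ _ _ A' Hxi) (proj1 (Hemb _ A' g' g' B' B')) E) as [E1 E2].
      rewrite <- E1 in E2, B'. apply (Hemb _ A g g' B B'), E2. }
  destruct Hplus as [Hc' [Hlt _]].
  exact (le_not_lt _ _ (cardinal_le_injects _ _ Hc' Hinj) Hlt).
Qed.

Definition jlam eta := least (fun j => lt j kappa /\ lt eta (lam j)).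

Lemma jlam_lt_kappa eta : lt eta lambda -> lt (jlam eta) kappa.
Proof.
  intros H. destruct (Hconv eta H) as [i Hi].
  exact (proj1 (least_holds (fun j => lt j kappa /\ lt eta (lam j)) i Hi)).
Qed.

Lemma lt_lam_jlam eta i : lt eta lambda -> le lt (jlam eta) i -> lt i kappa -> lt eta (lam i).
Proof.
  intros H Hji Hi. destruct (Hconv eta H) as [i0 Hi0].
  destruct (least_holds (fun j => lt j kappa /\ lt eta (lam j)) i0 Hi0) as [A B].
  eapply lt_le_trans; [exact B|]. destruct Hji as [Hji|<-]; [left; apply Hinc; auto|apply le_refl].
Qed.

Definition kappa_cofinal : O -> Prop :=
  choose (fun _ : O => False) (fun A => cofinal_in lt A lambda /\ has_order_type lt A kappa).

Lemma kappa_cofinal_spec :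
  cofinal_in lt kappa_cofinal lambda /\ has_order_type lt kappa_cofinal kappa.
Proof. unfold kappa_cofinal. apply choose_spec, Hcf. Qed.

(* The earlier stages whose top functions the move at stage [xi] has to bound:
   all of them below [lambda], a cofinal set of order type [kappa] at [lambda]. *)
Definition stages xi : O -> Prop :=
  if excluded_middle_informative (xi = lambda) then kappa_cofinal else fun eta => lt eta xi.

Definition stages_type xi := if excluded_middle_informative (xi = lambda) then kappa else xi.

Definition jstage xi := jlam (stages_type xi).

Lemma stages_lt xi eta : stages xi eta -> lt eta xi.
Proof.
  unfold stages. destruct (excluded_middle_informative (xi = lambda)) as [->|]; auto.
  apply kappa_cofinal_spec.
Qed.

Lemma stages_below_lambda xi eta : xi <> lambda -> lt eta xi -> stages xi eta.
Proof. unfold stages. destruct (excluded_middle_informative (xi = lambda)); tauto. Qed.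

Lemma stages_cofinal xi eta : lt eta xi -> exists eta', stages xi eta' /\ le lt eta eta'.
Proof.
  unfold stages. destruct (excluded_middle_informative (xi = lambda)) as [->|]; intros H.
  - apply kappa_cofinal_spec, H.
  - exists eta. split; [exact H|apply le_refl].
Qed.

Lemma stages_type_spec xi : le lt xi lambda ->
  has_order_type lt (stages xi) (stages_type xi) /\ lt (stages_type xi) lambda.
Proof.
  unfold stages, stages_type. destruct (excluded_middle_informative (xi = lambda)) as [->|E]; intros H.
  - split; [apply kappa_cofinal_spec|apply kappa_lt_lambda].
  - split; [apply order_type_segment|destruct H; [auto|contradiction]].
Qed.

Lemma jstage_lt_kappa xi : le lt xi lambda -> lt (jstage xi) kappa.
Proof. intros H. apply jlam_lt_kappa, stages_type_spec, H. Qed.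

Definition top (q : cond O) := cseq q (clen q).

(* A function below [lam] that, at every [i] past [jstage xi], bounds the top
   functions of [r] at [stages xi]. *)
Definition bound_fn xi (r : O -> cond O) i := choose zero (fun v => lt v (lam i) /\
  ((exists v', lt v' (lam i) /\ forall eta, stages xi eta -> lt (top (r eta) i) v') ->
   forall eta, stages xi eta -> lt (top (r eta) i) v)).

Lemma bound_fn_spec xi r : le lt xi lambda ->
  (forall eta, stages xi eta -> forall i, lt i kappa -> lt (top (r eta) i) (lam i)) ->
  (forall i, lt i kappa -> lt (bound_fn xi r i) (lam i)) /\
  (forall i, le lt (jstage xi) i -> lt i kappa ->
     forall eta, stages xi eta -> lt (top (r eta) i) (bound_fn xi r i)).
Proof.
  intros Hxi Hr.
  assert (Hp : forall i, lt i kappa -> lt (bound_fn xi r i) (lam i) /\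
    ((exists v', lt v' (lam i) /\ forall eta, stages xi eta -> lt (top (r eta) i) v') ->
     forall eta, stages xi eta -> lt (top (r eta) i) (bound_fn xi r i))).
  { intros i Hi. unfold bound_fn. apply choose_spec.
    destruct (classic (exists v', lt v' (lam i) /\ forall eta, stages xi eta -> lt (top (r eta) i) v'))
      as [[v [A B]]|h]; [exists v; auto|].
    exists zero. split; [apply zero_lt_lam, Hi|contradiction]. }
  split; [intros i Hi; apply Hp, Hi|].
  intros i Hji Hi. apply Hp; auto.
  destruct (stages_type_spec xi Hxi) as [Hot Hlt].
  destruct (Hreg i Hi) as [Hc [_ Hcof]].
  apply (regular_bounded_image (lam i) (stages xi) (stages_type xi) (fun eta => top (r eta) i)
           Hc Hcof Hot (lt_lam_jlam _ i Hlt Hji Hi)).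
  intros eta Heta. apply Hr; auto.
Qed.

Definition sup_len xi (r : O -> cond O) := least (fun u => forall eta, lt eta xi -> lt (clen (r eta)) u).

Definition stage_of xi (r : O -> cond O) beta :=
  choose zero (fun eta => lt eta xi /\ le lt beta (clen (r eta))).

(* The move at stage [xi]: the union of the earlier moves, topped by [bound_fn]. *)
Definition move xi (r : O -> cond O) : cond O :=
  Cond O (sup_len xi r) (fun beta i =>
    if excluded_middle_informative (beta = sup_len xi r) then bound_fn xi r i
    else cseq (r (stage_of xi r beta)) beta i).

Definition restrict xi (p : O -> cond O) eta :=
  if excluded_middle_informative (lt eta xi) then p eta else Cond O zero (fun _ _ => zero).

Lemma restrict_eq xi p eta : lt eta xi -> restrict xi p eta = p eta.
Proof. intros H. unfold restrict. destruct (excluded_middle_informative (lt eta xi)); tauto. Qed.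

Lemma move_top xi r i : top (move xi r) i = bound_fn xi r i.
Proof.
  unfold top, move. simpl. destruct (excluded_middle_informative (sup_len xi r = sup_len xi r)); tauto.
Qed.

Lemma restrict_restrict xi eta p : lt eta xi -> restrict eta (restrict xi p) = restrict eta p.
Proof.
  intros H. apply functional_extensionality. intros e. unfold restrict.
  destruct (excluded_middle_informative (lt e eta)) as [h|]; [|reflexivity].
  destruct (excluded_middle_informative (lt e xi)) as [|n]; [reflexivity|].
  exfalso. exact (n (lt_trans _ _ _ h H)).
Qed.

Definition coherent_at (p : cond O) beta : Prop :=
  (forall i, lt i kappa -> lt (cseq p beta i) (lam i)) /\
  (forall g, lt g beta -> ltstar lt kappa (cseq p g) (cseq p beta)) /\
  (forall c, is_cof lt beta c -> lt kappa c -> good_point lt kappa (cseq p) beta).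

Lemma inG_coherent_at p beta : inG lt kappa lam lplus p -> le lt beta (clen p) -> coherent_at p beta.
Proof. intros [_ H] Hb. exact (H beta Hb). Qed.

Section Move.
Variable xi : O.
Variable q : O -> cond O.
Hypothesis Hxi : le lt xi lambda.
Hypothesis Hq : forall eta, lt eta xi -> inG lt kappa lam lplus (q eta).
Hypothesis Hdec : forall eta eta', lt eta xi -> lt eta' eta -> extends lt kappa (q eta) (q eta').

Lemma len_mono eta eta' : lt eta' xi -> le lt eta eta' -> le lt (clen (q eta)) (clen (q eta')).
Proof. intros H [H0|<-]; [apply (Hdec eta' eta H H0)|apply le_refl]. Qed.

Lemma cseq_agree e1 e2 beta i : lt e1 xi -> lt e2 xi ->
  le lt beta (clen (q e1)) -> le lt beta (clen (q e2)) -> lt i kappa ->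
  cseq (q e1) beta i = cseq (q e2) beta i.
Proof.
  intros H1 H2 B1 B2 Hi. destruct (lt_trichotomy e1 e2) as [h|[<-|h]].
  - symmetry. apply (Hdec e2 e1 H2 h); auto.
  - reflexivity.
  - apply (Hdec e1 e2 H1 h); auto.
Qed.

Lemma sup_len_spec :
  lt (sup_len xi q) lplus /\ forall eta, lt eta xi -> lt (clen (q eta)) (sup_len xi q).
Proof.
  destruct (lplus_bounded xi (fun eta => clen (q eta)) Hxi (fun eta H => proj1 (Hq eta H)))
    as [u [Hu Hub]].
  split.
  - exact (le_lt_trans _ _ _ (least_le _ u Hub) Hu).
  - exact (least_holds (fun u => forall eta, lt eta xi -> lt (clen (q eta)) u) u Hub).
Qed.

Lemma lt_sup_len beta : lt beta (sup_len xi q) -> exists eta, lt eta xi /\ le lt beta (clen (q eta)).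
Proof.
  intros Hb. apply NNPP. intro h.
  refine (le_not_lt _ _ (least_le (fun u => forall eta, lt eta xi -> lt (clen (q eta)) u) beta _) Hb).
  intros eta He. apply NNPP. intro h'. apply h. exists eta. split; [exact He|apply not_lt_le, h'].
Qed.

Lemma move_below beta i eta : lt beta (sup_len xi q) -> lt eta xi ->
  le lt beta (clen (q eta)) -> lt i kappa -> cseq (move xi q) beta i = cseq (q eta) beta i.
Proof.
  intros Hb He Hle Hi. unfold move; simpl.
  destruct (excluded_middle_informative (beta = sup_len xi q)) as [->|_].
  - destruct (lt_irrefl _ Hb).
  - assert (C : lt (stage_of xi q beta) xi /\ le lt beta (clen (q (stage_of xi q beta)))).
    { unfold stage_of. apply choose_spec, lt_sup_len, Hb. }
    apply cseq_agree; tauto.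
Qed.

Lemma move_extends eta : lt eta xi -> extends lt kappa (move xi q) (q eta).
Proof.
  intros He. split; [left; apply sup_len_spec, He|].
  intros beta i Hle Hi. apply move_below; auto.
  eapply le_lt_trans; [exact Hle|apply sup_len_spec, He].
Qed.

Lemma move_coherent_below beta : lt beta (sup_len xi q) -> coherent_at (move xi q) beta.
Proof.
  intros Hb. destruct (lt_sup_len beta Hb) as [eta [He Hle]].
  assert (Below : forall g i, le lt g beta -> lt i kappa ->
            cseq (move xi q) g i = cseq (q eta) g i).
  { intros g i Hg Hi. apply move_below; auto; [eapply le_lt_trans|eapply le_trans]; eauto. }
  destruct (inG_coherent_at _ _ (Hq eta He) Hle) as [G1 [G2 G3]].
  split; [|split].
  - intros i Hi. rewrite Below; auto using le_refl.
  - intros g Hg. apply (ltstar_ext _ (cseq (q eta) g) (cseq (q eta) beta)); auto.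
    + intros i Hi. symmetry. apply Below; auto using lt_le_incl.
    + intros i Hi. symmetry. apply Below; auto using le_refl.
  - intros c Hc Hkc. apply (good_point_ext _ (cseq (q eta))); [|apply (G3 c); auto].
    intros g i Hg Hi. symmetry. apply Below; auto using lt_le_incl.
Qed.

Lemma top_lt_bound_fn :
  (forall i, lt i kappa -> lt (bound_fn xi q i) (lam i)) /\
  (forall i, le lt (jstage xi) i -> lt i kappa ->
     forall eta, stages xi eta -> lt (top (q eta) i) (bound_fn xi q i)).
Proof.
  apply (bound_fn_spec xi q Hxi). intros eta Heta i Hi.
  exact (proj1 (inG_coherent_at _ _ (Hq eta (stages_lt _ _ Heta)) (le_refl _)) i Hi).
Qed.

Lemma move_ltstar_top g : lt g (sup_len xi q) -> ltstar lt kappa (cseq (move xi q) g) (top (move xi q)).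
Proof.
  intros Hg. destruct (lt_sup_len g Hg) as [eta [He Hle]].
  destruct (stages_cofinal xi eta He) as [eta' [Hs Hee]].
  pose proof (stages_lt _ _ Hs) as He'.
  assert (Hle' : le lt g (clen (q eta'))) by (eapply le_trans; [exact Hle|apply len_mono; auto]).
  assert (Top : forall i, le lt (jstage xi) i -> lt i kappa -> le lt (top (q eta') i) (top (move xi q) i)).
  { intros i Hji Hi. rewrite move_top. left. apply (proj2 top_lt_bound_fn); auto. }
  apply (ltstar_ext _ (cseq (q eta') g) (top (move xi q))); [|reflexivity|].
  { intros i Hi. symmetry. apply move_below; auto. }
  destruct Hle' as [Hlt| ->].
  - apply (ltstar_le_trans _ _ (top (q eta')) _ (jstage xi)); [|apply jstage_lt_kappa, Hxi|exact Top].
    exact (proj1 (proj2 (inG_coherent_at _ _ (Hq eta' He') (le_refl _))) g Hlt).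
  - exists (jstage xi). split; [apply jstage_lt_kappa, Hxi|].
    intros i Hji Hi. rewrite move_top. apply (proj2 top_lt_bound_fn); auto.
Qed.

Lemma sup_len_cof_le_kappa c : is_cof lt (sup_len xi q) c ->
  (xi = lambda \/ exists eta0, lt eta0 xi /\ forall eta, lt eta xi -> le lt (clen (q eta)) (clen (q eta0))) ->
  le lt c kappa.
Proof.
  intros Hc [Exi|[eta0 [H0 Hmax]]].
  - destruct (stages_type_spec xi Hxi) as [Hot _].
    replace kappa with (stages_type xi) by (unfold stages_type; destruct (excluded_middle_informative (xi = lambda)); tauto).
    apply (cof_le_monotone_cofinal _ c (stages xi) (fun eta => clen (q eta)) _ Hc Hot).
    + intros eta Hs. apply sup_len_spec, stages_lt, Hs.
    + intros b Hb. destruct (lt_sup_len b Hb) as [eta [He Hle]].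
      destruct (stages_cofinal xi eta He) as [eta' [Hs Hee]].
      exists eta'. split; [exact Hs|eapply le_trans; [exact Hle|apply len_mono; auto using stages_lt]].
    + intros y y' _ Hy' Hyy. apply len_mono; auto using stages_lt.
  - destruct (order_type_exists (fun eta => eta = eta0) xi) as [d Hd]; [intros x ->; exact H0|].
    apply (le_trans _ d).
    + apply (cof_le_monotone_cofinal _ c _ (fun eta => clen (q eta)) _ Hc Hd).
      * intros y ->. apply sup_len_spec, H0.
      * intros b Hb. destruct (lt_sup_len b Hb) as [eta [He Hle]].
        exists eta0. split; [reflexivity|eapply le_trans; [exact Hle|apply Hmax, He]].
      * intros y y' -> -> _. apply le_refl.
    + apply (order_type_le_embedding _ _ d kappa (fun _ => zero) Hd (order_type_segment kappa)).
      * intros _ _. apply zero_lt_kappa.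
      * intros x y -> -> H. destruct (lt_irrefl _ H).
Qed.

Hypothesis Hplay : forall eta, lt eta xi -> even_ord lt eta -> q eta = move eta (restrict eta q).

Lemma top_increasing_at_even e1 e2 i : lt e1 e2 -> lt e2 xi -> even_ord lt e2 ->
  le lt (jstage e2) i -> lt i kappa -> lt (top (q e1) i) (top (q e2) i).
Proof.
  intros H12 He2 Hev Hji Hi.
  assert (He2l : lt e2 lambda) by exact (lt_le_trans _ _ _ He2 Hxi).
  rewrite (Hplay e2 He2 Hev), move_top, <- (restrict_eq e2 q e1 H12).
  apply (bound_fn_spec e2 (restrict e2 q) (lt_le_incl _ _ He2l)); auto.
  - intros eta Heta i' Hi'. pose proof (stages_lt _ _ Heta) as He.
    rewrite restrict_eq by exact He.
    exact (proj1 (inG_coherent_at _ _ (Hq eta (lt_trans _ _ _ He He2)) (le_refl _)) i' Hi').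
  - apply stages_below_lambda; [intros ->; exact (lt_irrefl _ He2l)|exact H12].
Qed.

Lemma even_stages_cofinal :
  ~ (exists eta0, lt eta0 xi /\ forall eta, lt eta xi -> le lt (clen (q eta)) (clen (q eta0))) ->
  forall b, lt b (sup_len xi q) ->
    exists eta, (lt eta xi /\ even_ord lt eta) /\ le lt b (clen (q eta)).
Proof.
  intros NoLast b Hb. destruct (lt_sup_len b Hb) as [eta [He Hle]].
  assert (Hnext : exists eta', lt eta' xi /\ lt (clen (q eta)) (clen (q eta'))).
  { apply NNPP. intro h. apply NoLast. exists eta. split; [exact He|].
    intros eta' He'. apply not_lt_le. intro h'. apply h. eauto. }
  destruct Hnext as [eta' [He' Hl']].
  assert (Hb' : le lt b (clen (q eta'))) by (left; eapply le_lt_trans; eauto).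
  destruct (even_or_succ_even eta') as [Ev|Od]; [exists eta'; auto|].
  pose proof (succ_is_succ _ _ He') as Ss.
  assert (Sxi : lt (succ eta') xi).
  { destruct (succ_le eta' xi He') as [h|E]; [exact h|]. exfalso. apply NoLast.
    exists eta'. split; [exact He'|]. intros e He''. apply len_mono; [exact He'|].
    rewrite <- E in He''. exact (is_succ_lt_le _ _ _ Ss He''). }
  exists (succ eta'). split; [split; [exact Sxi|apply Od, Ss]|].
  eapply le_trans; [exact Hb'|]. apply len_mono; [exact Sxi|left; apply Ss].
Qed.

(* Below [lambda], with no last earlier move, the tops at the even stages are
   increasing past [jstage]; a pigeonhole on [jstage < kappa < c] makes one
   coordinate work on a cofinal set. *)
Lemma move_good_top c : is_cof lt (sup_len xi q) c -> lt kappa c ->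
  good_point lt kappa (cseq (move xi q)) (sup_len xi q).
Proof.
  intros Hc Hkc.
  destruct (classic (xi = lambda \/ exists eta0, lt eta0 xi /\
              forall eta, lt eta xi -> le lt (clen (q eta)) (clen (q eta0)))) as [Last|NoLast].
  { exfalso. exact (le_not_lt _ _ (sup_len_cof_le_kappa c Hc Last) Hkc). }
  apply not_or_and in NoLast as [Nxi NoLast].
  assert (Hxl : lt xi lambda) by (destruct Hxi; [auto|contradiction]).
  destruct (cofinal_pigeonhole (sup_len xi q) c kappa (fun eta => lt eta xi /\ even_ord lt eta)
              (fun eta => clen (q eta)) jstage Hc Hkc) as [j [Hj Hcof]].
  - intros eta [He _]. apply sup_len_spec, He.
  - apply even_stages_cofinal, NoLast.
  - intros eta [He _]. apply jstage_lt_kappa. left. exact (lt_trans _ _ _ He Hxl).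
  - apply (good_point_of_cofinal _ _ _ c (fun a => exists eta,
             (lt eta xi /\ even_ord lt eta) /\ le lt (jstage eta) j /\ a = clen (q eta)) j Hc);
      [split|exact Hj|].
    + intros a [eta [[He _] [_ ->]]]. apply sup_len_spec, He.
    + intros b Hb. destruct (Hcof b Hb) as [eta [Y [Hje Hle]]]. exists (clen (q eta)). eauto.
    + intros i Hji Hi a1 a2 [e1 [[He1 _] [_ ->]]] [e2 [[He2 Hev2] [Hj2 ->]]] Hlt.
      assert (H12 : lt e1 e2).
      { destruct (le_or_lt e2 e1) as [h|h]; [|exact h].
        exfalso. exact (le_not_lt _ _ (len_mono _ _ He1 h) Hlt). }
      rewrite (move_below _ i e1), (move_below _ i e2); auto using le_refl; try apply sup_len_spec; auto.
      apply top_increasing_at_even; auto. eapply le_trans; eauto.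
Qed.

Lemma move_in_G : inG lt kappa lam lplus (move xi q).
Proof.
  split; [apply sup_len_spec|]. intros beta [Hb| ->]; [apply move_coherent_below, Hb|].
  split; [|split].
  - intros i Hi. change (lt (top (move xi q) i) (lam i)). rewrite move_top.
    apply (proj1 top_lt_bound_fn), Hi.
  - apply move_ltstar_top.
  - apply move_good_top.
Qed.

End Move.

Definition strategy xi p := move xi (restrict xi p).

Theorem strategy_wins : strat_closed lt (inG lt kappa lam lplus) (extends lt kappa) lambda.
Proof.
  exists strategy. split.
  - intros xi p p' H. unfold strategy. f_equal. apply functional_extensionality. intros eta.
    unfold restrict. destruct (excluded_middle_informative (lt eta xi)); auto.
  - intros xi p Hxi Hev H.
    assert (Hr : forall eta, lt eta xi -> restrict xi p eta = p eta) by (intros; apply restrict_eq; auto).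
    assert (Hq : forall eta, lt eta xi -> inG lt kappa lam lplus (restrict xi p eta)).
    { intros eta He. rewrite Hr; auto. apply H, He. }
    assert (Hdec : forall eta eta', lt eta xi -> lt eta' eta ->
              extends lt kappa (restrict xi p eta) (restrict xi p eta')).
    { intros eta eta' He He'. rewrite !Hr; [apply H; auto|eapply lt_trans; eauto|auto]. }
    split.
    + apply move_in_G; auto. intros eta He Hev'.
      rewrite Hr, restrict_restrict by exact He. apply H; auto.
    + intros eta He. rewrite <- Hr by exact He. apply move_extends; auto.
Qed.

End Strategy.
End WellOrder.

Theorem proposition2p10 (O : Type) (lt : O -> O -> Prop) (Hwo : well_order lt)
  (lambda kappa lplus : O) (lam : O -> O)
  (Hsing : singular_cardinal lt lambda) (Hcf : is_cof lt lambda kappa)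
  (Hplus : is_succ_cardinal lt lambda lplus)
  (Hreg : forall i, lt i kappa -> regular_cardinal lt (lam i))
  (Hinc : forall i j, lt i kappa -> lt j kappa -> lt i j -> lt (lam i) (lam j))
  (Hbound : forall i, lt i kappa -> lt (lam i) lambda)
  (Hconv : forall b, lt b lambda -> exists i, lt i kappa /\ lt b (lam i)) :
  strat_closed lt (inG lt kappa lam lplus) (extends lt kappa) lambda.
Proof.
  exact (strategy_wins O lt Hwo (inhabits lambda) lambda kappa lplus lam
           Hsing Hcf Hplus Hreg Hinc Hconv).
Qed.
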